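(* For every integer $n\ge 1$ and every integer $i$ with $0\le i\le n$, there exists a cyclic two-fold directed triple system DTS$(6n+1,2)$ with fine structure $(c_1,c_2)=(4n-4i,\,2i)$, and there exists a cyclic two-fold Mendelsohn triple system MTS$(6n+1,2)$ with fine structure $(c_1,c_2)=(4n-4i,\,2i)$.
   Context: A directed triple $[a,b,c]$ ($a,b,c$ distinct) contains the ordered pairs $(a,b),(a,c),(b,c)$. A cyclic triple $\langle a,b,c\rangle$ ($a,b,c$ distinct, with $\langle a,b,c\rangle=\langle b,c,a\rangle=\langle c,a,b\rangle$) contains the ordered pairs $(a,b),(b,c),(c,a)$. A cyclic $\lambda$-fold directed triple system DTS$(v,\lambda)$ (resp. Mendelsohn triple system MTS$(v,\lambda)$) is a multiset of directed triples (resp. cyclic triples) on $\mathbb Z_v$ such that each ordered pair of distinct elements of $\mathbb Z_v$ is contained in exactly $\lambda$ triples (with multiplicity), and the multiset is invariant under the translation $x\mapsto x+1$. Its triples form translation orbits with multiplicities; a base block is an orbit representative. The fine structure is $(c_1,\ldots,c_\lambda)$, where $c_i$ is the number of distinct base blocks (orbits) occurring with multiplicity exactly $i$. *)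

From mathcomp Require Import all_boot.
Set Implicit Arguments. Unset Strict Implicit. Unset Printing Implicit Defensive.

(* Points are elements of Z_v, represented as 'I_v with addition mod v. *)
Lemma ord_gt0 v (x : 'I_v) : 0 < v.
Proof. by case: v x => [[]|]. Qed.

Definition padd v (k : nat) (x : 'I_v) : 'I_v := Ordinal (ltn_pmod (x + k) (ord_gt0 x)).

Definition trip v := ('I_v * 'I_v * 'I_v)%type.

Definition tshift v (k : nat) (t : trip v) : trip v :=
  let '(a, b, c) := t in (padd k a, padd k b, padd k c).

Definition distinct3 v (t : trip v) : bool :=
  let '(a, b, c) := t in [&& a != b, a != c & b != c].

(* ordered pairs contained in a directed triple [a,b,c] *)
Definition dpairs v (t : trip v) : seq ('I_v * 'I_v) :=
  let '(a, b, c) := t in [:: (a, b); (a, c); (b, c)].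
(* ordered pairs contained in a cyclic triple <a,b,c> *)
Definition cpairs v (t : trip v) : seq ('I_v * 'I_v) :=
  let '(a, b, c) := t in [:: (a, b); (b, c); (c, a)].

Definition rot v (t : trip v) : trip v := let '(a, b, c) := t in (b, c, a).

(* identification of representations: directed triples are equal iff equal;
   cyclic triples <a,b,c> = <b,c,a> = <c,a,b> *)
Definition deqv v (t u : trip v) : bool := u == t.
Definition ceqv v (t u : trip v) : bool := [|| u == t, u == rot t | u == rot (rot t)].

(* A multiset of triples is given by a list s of representations; the
   multiplicity of the triple represented by t is count (eqv t) s. *)
Definition mult v (eqv : trip v -> trip v -> bool) (s : seq (trip v)) (t : trip v) : nat :=
  count (eqv t) s.

Definition cyclic_system v (lam : nat) (eqv : trip v -> trip v -> bool)
    (pairs : trip v -> seq ('I_v * 'I_v)) (s : seq (trip v)) : Prop :=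
  [/\ all (@distinct3 v) s,
      (forall x y : 'I_v, x != y ->
         \sum_(t <- s) count (pred1 (x, y)) (pairs t) = lam)
    & (forall t : trip v, mult eqv s t = mult eqv s (tshift 1 t))].

Definition cyclic_DTS v lam (s : seq (trip v)) := cyclic_system lam (@deqv v) (@dpairs v) s.
Definition cyclic_MTS v lam (s : seq (trip v)) := cyclic_system lam (@ceqv v) (@cpairs v) s.

Definition torbit v (eqv : trip v -> trip v -> bool) (t : trip v) : {set trip v} :=
  [set u | [exists k : 'I_v, eqv (tshift k t) u]].

(* c_i : number of distinct orbits occurring with multiplicity exactly i *)
Definition fine_c v (eqv : trip v -> trip v -> bool) (s : seq (trip v)) (i : nat) : nat :=
  #|[set torbit eqv t | t in [pred t : trip v | distinct3 t && (mult eqv s t == i)]]|.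

From Pilot Require Import Defs.
From mathcomp Require Import all_boot zify.
Set Implicit Arguments. Unset Strict Implicit. Unset Printing Implicit Defensive.
Local Notation rot := Defs.rot.

(* Put v = 6n + 1.  Developing a base block {0, a, a + b} under the translations of Z_v covers
   exactly the ordered pairs whose difference is a difference of the block: a, b and a + b for
   the directed triple [0, a, a + b], and a, b and -(a + b) for the cyclic triple <0, a, a + b>.
   Given 2n triples {a_j, b_j, x_j} partitioning {1, ..., 6n} with x_j = a_j + b_j
   (resp. x_j = -(a_j + b_j)), take the block {0, a_j, a_j + b_j} twice for j < 2i, and the two
   blocks {0, a_j, a_j + b_j} and {0, b_j, a_j + b_j} once each for 2i <= j < 2n.  Every
   difference is then covered exactly twice, and since the blocks have trivial stabilizers and
   lie in pairwise distinct orbits, there are 2i orbits of multiplicity 2 and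
   2(2n - 2i) = 4n - 4i orbits of multiplicity 1. *)


Section Translation.
Variable v : nat.
Hypothesis v_gt0 : 0 < v.

Lemma padd_inj k : injective (@padd v k).
Proof.
move=> x y /(congr1 val) /= /eqP; rewrite eqn_modDr !modn_small //.
by move/eqP/val_inj.
Qed.

Lemma tshift_inj k : injective (@tshift v k).
Proof.
move=> [[a b] c] [[a' b'] c'] [] Ea Eb Ec.
have addk_inj (x y : 'I_v) : x + k = y + k %[mod v] -> x = y.
  by move=> E; apply: (@padd_inj k); apply: val_inj.
by rewrite (addk_inj _ _ Ea) (addk_inj _ _ Eb) (addk_inj _ _ Ec).
Qed.

Lemma tshiftD k k' (t : trip v) : tshift k (tshift k' t) = tshift (k' + k) t.
Proof.
by case: t => [[a b] c]; congr (_, _, _); try congr (_, _);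
  apply: val_inj => /=; rewrite modnDml addnA.
Qed.

Lemma tshift_modn k (t : trip v) : tshift (k %% v) t = tshift k t.
Proof.
by case: t => [[a b] c]; congr (_, _, _); try congr (_, _);
  apply: val_inj => /=; rewrite modnDmr.
Qed.

Lemma tshift0 (t : trip v) : tshift 0 t = t.
Proof.
by case: t => [[a b] c]; congr (_, _, _); try congr (_, _);
  apply: val_inj => /=; rewrite addn0 modn_small.
Qed.

Lemma tshiftK k (t : trip v) : tshift (v.-1 * k) (tshift k t) = t.
Proof. by rewrite tshiftD -mulSn prednK // -tshift_modn modnMr tshift0. Qed.

Lemma rot_tshift k (t : trip v) : rot (tshift k t) = tshift k (rot t).
Proof. by case: t => [[a b] c]. Qed.

Lemma rot3 (t : trip v) : rot (rot (rot t)) = t.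
Proof. by case: t => [[a b] c]. Qed.

Lemma distinct3_tshift k (t : trip v) : distinct3 (tshift k t) = distinct3 t.
Proof. by case: t => [[a b] c] /=; rewrite !(inj_eq (@padd_inj k)). Qed.

Record shift_equivalence (e : rel (trip v)) : Prop := ShiftEquivalence {
  shift_eqv_refl : reflexive e;
  shift_eqv_sym : symmetric e;
  shift_eqv_trans : transitive e;
  shift_eqv_tshift : forall k t u, e (tshift k t) (tshift k u) = e t u }.

Lemma deqv_shift_equivalence : shift_equivalence (@deqv v).
Proof.
split; rewrite /deqv.
- by move=> t.
- by move=> t u; rewrite eq_sym.
- by move=> u t w /eqP-> /eqP->.
- by move=> k t u; rewrite (inj_eq (@tshift_inj k)).
Qed.

Lemma eq_rot_sym (u t : trip v) : (u == rot t) = (t == rot (rot u)).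
Proof.
case: u => [[a b] c]; case: t => [[a' b'] c'] /=.
by apply/eqP/eqP => [[-> -> ->]|[-> -> ->]].
Qed.

Lemma ceqv_shift_equivalence : shift_equivalence (@ceqv v).
Proof.
split; rewrite /ceqv.
- by move=> t; rewrite eqxx.
- move=> t u; rewrite (eq_sym u t) (eq_rot_sym u t) -(eq_rot_sym t u).
  by case: (t == u); case: (t == rot (rot u)); case: (t == rot u).
- move=> u t w /or3P [/eqP->|/eqP->|/eqP->] /or3P [/eqP->|/eqP->|/eqP->];
    by rewrite ?rot3 ?eqxx ?orbT.
- by move=> k t u; rewrite !rot_tshift !(inj_eq (@tshift_inj k)).
Qed.

Definition shift_free (e : rel (trip v)) (g : trip v) :=
  forall k, e g (tshift k g) -> k %% v = 0.

Definition orbit_seq (g : trip v) := [seq tshift k g | k : 'I_v <- index_enum 'I_v].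

Definition develop (bases : seq (trip v)) := flatten (map orbit_seq bases).

Lemma all_distinct3_develop bases :
  all (@distinct3 v) bases -> all (@distinct3 v) (develop bases).
Proof.
move=> /allP dB; apply/allP => t /flatten_mapP [B /dB dB'] /mapP [k _ ->].
by rewrite distinct3_tshift.
Qed.

Section Orbits.
Variable e : rel (trip v).
Hypothesis eE : shift_equivalence e.

Lemma torbitP t u : reflect (exists k, e (tshift k t) u) (u \in torbit e t).
Proof.
rewrite inE; apply: (iffP existsP) => [[k ek]|[k ek]]; first by exists k.
by exists (Ordinal (ltn_pmod k v_gt0)); rewrite /= tshift_modn.
Qed.

Lemma torbit_refl t : t \in torbit e t.
Proof. by apply/torbitP; exists 0; rewrite tshift0 (shift_eqv_refl eE). Qed.

Lemma torbit_eq t g : t \in torbit e g -> torbit e t = torbit e g.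
Proof.
case/torbitP=> k ekt; apply/setP => u; apply/torbitP/torbitP => [[k' etu]|[k' egu]].
  exists (k + k'); apply: (shift_eqv_trans eE) etu.
  by rewrite -tshiftD (shift_eqv_tshift eE).
exists (k' + v.-1 * k); apply: (shift_eqv_trans eE) egu.
have -> : tshift k' g = tshift (k' + v.-1 * k) (tshift k g).
  by rewrite -{1}(tshiftK k g) !tshiftD (addnC k').
by rewrite (shift_eqv_tshift eE) (shift_eqv_sym eE).
Qed.

Lemma shift_free_eq g k k' :
  shift_free e g -> e (tshift k g) (tshift k' g) -> k = k' %[mod v].
Proof.
move=> free; rewrite -(shift_eqv_tshift eE (v.-1 * k)) tshiftK tshiftD => /free.
move=> free_k; have : (k' + v.-1 * k + k) %% v = k %% v by rewrite -modnDml free_k.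
by rewrite -addnA -mulSnr prednK // addnC mulnC modnMDl.
Qed.

Lemma count_orbit_seq g t :
  shift_free e g -> count (e t) (orbit_seq g) = (t \in torbit e g).
Proof.
move=> free; rewrite count_map; case: (boolP (t \in torbit e g)) => [/torbitP [k0 ek0]|tg].
  rewrite (eq_count (a2 := pred1 (Ordinal (ltn_pmod k0 v_gt0)))).
    by rewrite (count_uniq_mem _ (index_enum_uniq _)) mem_index_enum.
  move=> k /=; apply/idP/eqP => [ek|->]; last by rewrite /= tshift_modn (shift_eqv_sym eE).
  apply: val_inj => /=; rewrite -(modn_small (ltn_ord k)).
  by apply: (shift_free_eq free); apply: (@shift_eqv_trans _ eE t); rewrite (shift_eqv_sym eE).
rewrite (eq_count (a2 := pred0)) ?count_pred0 // => k /=.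
apply/negP => ek; case/negP: tg; apply/torbitP; exists k; by rewrite (shift_eqv_sym eE).
Qed.

Lemma count_orbit_seq_tshift g t :
  count (e (tshift 1 t)) (orbit_seq g) = count (e t) (orbit_seq g).
Proof.
rewrite !count_map -!sum1_count (reindex_inj (@padd_inj 1)) /=.
by apply: eq_bigl => k /=; rewrite tshift_modn -tshiftD (shift_eqv_tshift eE).
Qed.

Lemma mult_develop bases t :
  mult e (develop bases) t = \sum_(B <- bases) count (e t) (orbit_seq B).
Proof. by rewrite /mult /develop count_flatten sumnE !big_map. Qed.

Lemma mult_develop_tshift bases t :
  mult e (develop bases) (tshift 1 t) = mult e (develop bases) t.
Proof. by rewrite !mult_develop; apply: eq_bigr => B _; rewrite count_orbit_seq_tshift. Qed.

End Orbits.

Definition diff (p q : 'I_v) : nat := (q + v - p) %% v.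

Lemma eqn_diff (p q x y : 'I_v) :
  (diff p q == diff x y) = ((q + x) %% v == (y + p) %% v).
Proof.
have [p_le x_le] := (ltnW (ltn_ord p), ltnW (ltn_ord x)).
rewrite /diff -(eqn_modDr (p + x)).
have -> : q + v - p + (p + x) = q + x + v by lia.
have -> : y + v - x + (p + x) = y + p + v by lia.
by rewrite !modnDr.
Qed.

Lemma diff_gt0 (x y : 'I_v) : x != y -> 0 < diff x y.
Proof.
move=> xy; rewrite lt0n; apply: contra xy => /eqP dxy0.
have : diff x x == diff x y by rewrite dxy0 /diff addKn modnn.
by rewrite eqn_diff eqn_modDr !modn_small.
Qed.

Lemma diff_ltn (x y : 'I_v) : diff x y < v.
Proof. exact: ltn_pmod. Qed.

Lemma diff_padd k (p q : 'I_v) : diff (padd k p) (padd k q) = diff p q.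
Proof. by apply/eqP; rewrite eqn_diff /= modnDml modnDmr addnAC addnA. Qed.

(* Exactly one translate maps p to x, and it maps q to y iff the differences agree. *)
Lemma sum_padd_pair_eq (p q x y : 'I_v) :
  \sum_(k : 'I_v) ((padd k p, padd k q) == (x, y)) = (diff p q == diff x y).
Proof.
rewrite eqn_diff.
transitivity (\sum_(k : 'I_v) ((padd k p == x) * ((q + x) %% v == (y + p) %% v))).
  apply: eq_bigr => k _; rewrite xpair_eqE.
  case: (boolP (padd k p == x)) => [/eqP <-|] //=.
  rewrite -(inj_eq val_inj) /= mul1n modnDmr.
  rewrite -[X in _ == X](modn_small (ltn_ord y)) -(eqn_modDr p).
  by rewrite addnAC addnA.
rewrite -big_distrl /=.
suff -> : \sum_(k : 'I_v) (padd k p == x) = 1 by rewrite mul1n.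
have paddC (k : 'I_v) : padd k p = padd p k by apply: val_inj; rewrite /= addnC.
under eq_bigr => k _ do rewrite paddC.
rewrite -(reindex_inj (@padd_inj p) (P := xpredT) (F := fun k => nat_of_bool (k == x))) /=.
by rewrite (bigD1 x) //= eqxx big1 // => k /negbTE ->.
Qed.

Definition pshift k (pq : 'I_v * 'I_v) := (padd k pq.1, padd k pq.2).

Lemma dpairs_tshift k t : dpairs (tshift k t) = map (pshift k) (@dpairs v t).
Proof. by case: t => [[a b] c]. Qed.

Lemma cpairs_tshift k t : cpairs (tshift k t) = map (pshift k) (@cpairs v t).
Proof. by case: t => [[a b] c]. Qed.

Section Covering.
Variable pairs : trip v -> seq ('I_v * 'I_v).
Hypothesis pairs_tshift : forall k t, pairs (tshift k t) = map (pshift k) (pairs t).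

Lemma count_pair_develop bases x y :
  \sum_(t <- develop bases) count (pred1 (x, y)) (pairs t) =
  \sum_(B <- bases) \sum_(pq <- pairs B) (diff pq.1 pq.2 == diff x y).
Proof.
rewrite big_flatten big_map; apply: eq_bigr => B _.
rewrite big_map; under eq_bigr => k _ do rewrite pairs_tshift count_map -sum1_count big_mkcond.
rewrite exchange_big /=; apply: eq_bigr => [[p q]] _ /=.
by rewrite -sum_padd_pair_eq; apply: eq_bigr => k _; case: eqP.
Qed.

Lemma develop_covers bases lam :
  (forall d, 0 < d < v ->
     \sum_(B <- bases) \sum_(pq <- pairs B) (diff pq.1 pq.2 == d) = lam) ->
  forall x y : 'I_v, x != y ->
    \sum_(t <- develop bases) count (pred1 (x, y)) (pairs t) = lam.
Proof.
by move=> cover x y xy; rewrite count_pair_develop cover // diff_gt0 // diff_ltn.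
Qed.

End Covering.

Section FineStructure.
Variables (e : rel (trip v)) (I : eqType) (idx : seq I) (blk : I -> trip v) (mu : I -> nat).
Hypotheses (eE : shift_equivalence e) (idx_uniq : uniq idx).
Hypothesis blk_torbit_inj :
  forall q q', q \in idx -> q' \in idx -> blk q' \in torbit e (blk q) -> q = q'.
Hypothesis blk_free : forall q, q \in idx -> shift_free e (blk q).
Hypothesis blk_distinct3 : forall q, q \in idx -> distinct3 (blk q).

Definition repeat_bases := flatten [seq nseq (mu q) (blk q) | q <- idx].

Lemma mult_repeat_bases t :
  mult e (develop repeat_bases) t = \sum_(q <- idx) mu q * (t \in torbit e (blk q)).
Proof.
rewrite mult_develop /repeat_bases big_flatten big_map; apply: eq_big_seq => q qi.
by rewrite big_nseq iter_addn_0 mulnC (count_orbit_seq eE _ (blk_free qi)).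
Qed.

Lemma torbit_blk_unique t q q' : q \in idx -> q' \in idx ->
  t \in torbit e (blk q) -> t \in torbit e (blk q') -> q = q'.
Proof.
move=> qi q'i tq tq'; apply: blk_torbit_inj => //.
by rewrite -(torbit_eq eE tq) (torbit_eq eE tq') torbit_refl.
Qed.

Lemma mult_repeat_bases_torbit t q : q \in idx -> t \in torbit e (blk q) ->
  mult e (develop repeat_bases) t = mu q.
Proof.
move=> qi tq; rewrite mult_repeat_bases (bigD1_seq q) //= tq muln1 big1_seq ?addn0 //.
move=> q' /andP [q'q q'i]; case: (boolP (t \in torbit e (blk q'))) => [tq'|]; last by rewrite muln0.
by rewrite (torbit_blk_unique q'i qi tq' tq) eqxx in q'q.
Qed.

Lemma mult_repeat_bases_out t : ~~ has (fun q => t \in torbit e (blk q)) idx ->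
  mult e (develop repeat_bases) t = 0.
Proof.
move=> /hasPn tout; rewrite mult_repeat_bases big1_seq // => q /andP [_ qi].
by rewrite (negbTE (tout q qi)) muln0.
Qed.

Lemma fine_c_repeat_bases m : 0 < m ->
  fine_c e (develop repeat_bases) m = count (fun q => mu q == m) idx.
Proof.
move=> m_gt0; rewrite /fine_c.
set orbs := map (fun q => torbit e (blk q)) (filter (fun q => mu q == m) idx).
have -> : [set torbit e t | t in [pred t | distinct3 t && (mult e (develop repeat_bases) t == m)]]
    = [set O in orbs].
  apply/setP => O; rewrite inE; apply/imsetP/mapP.
  - case=> t; rewrite inE => /andP [_ /eqP tm] ->.
    case: (boolP (has (fun q => t \in torbit e (blk q)) idx)) => [/hasP [q qi tq]|tout].
      exists q; first by rewrite mem_filter qi -tm (mult_repeat_bases_torbit qi tq) eqxx.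
      exact: torbit_eq.
    by move: m_gt0; rewrite -tm mult_repeat_bases_out.
  - case=> q; rewrite mem_filter => /andP [/eqP qm qi] ->.
    exists (blk q) => //; rewrite inE blk_distinct3 //=.
    by rewrite (mult_repeat_bases_torbit qi (torbit_refl eE _)) qm.
have orbs_uniq : uniq orbs.
  rewrite map_inj_in_uniq ?filter_uniq // => q q'.
  rewrite !mem_filter => /andP [_ qi] /andP [_ q'i] qq'.
  by apply: blk_torbit_inj => //; rewrite qq' torbit_refl.
by rewrite cardsE (card_uniqP orbs_uniq) size_map size_filter.
Qed.

End FineStructure.

Definition diff3 (t : trip v) := let '(x, y, z) := t in (diff x y, diff y z, diff z x).
Definition nrot (w : nat * nat * nat) := let '(a, b, c) := w in (b, c, a).

Lemma diff3_tshift k t : diff3 (tshift k t) = diff3 t.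
Proof. by case: t => [[a b] c] /=; rewrite !diff_padd. Qed.

Lemma diff3_rot t : diff3 (rot t) = nrot (diff3 t).
Proof. by case: t => [[a b] c]. Qed.

Definition zmod (x : nat) : 'I_v := Ordinal (ltn_pmod x v_gt0).

Definition base_block (a b : nat) : trip v := (zmod 0, zmod a, zmod (a + b)).

Lemma diff_zmod0 c : diff (zmod 0) (zmod c) = c %% v.
Proof. by rewrite /diff /= mod0n subn0 modnDr modn_mod. Qed.

Lemma diff_zmod_0 c : diff (zmod c) (zmod 0) = (v - c %% v) %% v.
Proof. by rewrite /diff /= mod0n add0n. Qed.

Lemma diff_zmodD a b : a < v -> b < v -> diff (zmod a) (zmod (a + b)) = b.
Proof.
move=> av bv; rewrite /diff /= (modn_small av).
case: (ltnP (a + b) v) => abv.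
  by rewrite (modn_small abv) (_ : a + b + v - a = b + v) ?modnDr ?modn_small //; lia.
have -> : (a + b) %% v = a + b - v by rewrite -{1}(subnK abv) modnDr modn_small //; lia.
by rewrite (_ : a + b - v + v - a = b) ?modn_small //; lia.
Qed.

Lemma base_block_distinct3 a b : 0 < a < v -> 0 < b < v -> (a + b) %% v != 0 ->
  distinct3 (base_block a b).
Proof.
move=> /andP [a_gt0 av] /andP [b_gt0 bv] ab0 /=; apply/and3P; split.
- by rewrite -(inj_eq val_inj) /= mod0n (modn_small av) eq_sym -lt0n.
- by rewrite -(inj_eq val_inj) /= mod0n eq_sym.
- apply: contraTneq b_gt0 => ab.
  by rewrite -(diff_zmodD av bv) -ab /diff addKn modnn.
Qed.

Lemma diff3_base_block a b : a < v -> b < v ->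
  diff3 (base_block a b) = (a, b, (v - (a + b) %% v) %% v).
Proof. by move=> av bv; rewrite /= diff_zmod0 (modn_small av) diff_zmodD // diff_zmod_0. Qed.

Lemma base_block_free_d a b : shift_free (@deqv v) (base_block a b).
Proof. by move=> k /eqP/(congr1 (fun t : trip v => val t.1.1)); rewrite /= mod0n add0n. Qed.

Lemma base_block_free_c a b : a < v -> b < v -> a != b ->
  shift_free (@ceqv v) (base_block a b).
Proof.
move=> av bv ab k /or3P [E | /eqP/(congr1 diff3) | /eqP/(congr1 diff3)].
- exact: (@base_block_free_d a b k E).
- rewrite diff3_tshift diff3_rot diff3_base_block // => -[ba _ _].
  by rewrite ba eqxx in ab.
- rewrite diff3_tshift !diff3_rot diff3_base_block // => -[_ ba _].
  by rewrite ba eqxx in ab.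
Qed.

Section DifferenceTriples.
Variables (N i : nat) (fa fb fx : nat -> nat).

Definition diffs j := [:: fa j; fb j; fx j].

Hypothesis diffs_range :
  forall j, j < N -> [/\ 0 < fa j < v, 0 < fb j < v & 0 < fx j < v].
Hypothesis diffs_partition :
  forall d, 0 < d < v -> \sum_(j <- iota 0 N) count (pred1 d) (diffs j) = 1.
Hypothesis i_le : 2 * i <= N.
Hypothesis sum_ab_neq0 : forall j, j < N -> (fa j + fb j) %% v != 0.

Lemma count_diffs_le1 j d : j < N -> 0 < d < v -> count (pred1 d) (diffs j) <= 1.
Proof.
by move=> jN dv; rewrite -(diffs_partition dv) (big_rem j) ?mem_iota //= leq_addr.
Qed.

Lemma diffs_neq j : j < N -> [/\ fa j != fb j, fa j != fx j & fb j != fx j].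
Proof.
move=> jN; have [ha hb _] := diffs_range jN.
move: (count_diffs_le1 jN ha) (count_diffs_le1 jN hb); rewrite /= !eqxx => ca cb.
by split; lia.
Qed.

Lemma diffs_index_unique j j' d : j < N -> j' < N ->
  d \in diffs j -> d \in diffs j' -> j = j'.
Proof.
move=> jN j'N dj dj'; apply/eqP/negPn/negP => jj'.
have dv : 0 < d < v.
  by have [ha hb hx] := diffs_range jN; move: dj; rewrite !inE => /or3P [] /eqP ->.
have j'_rem : j' \in rem j (iota 0 N) by rewrite mem_rem_uniq ?iota_uniq // inE eq_sym jj' mem_iota.
move: (diffs_partition dv); rewrite (big_rem j) ?mem_iota // (big_rem j') //.
by rewrite -!has_pred1 !has_count /= in dj dj' *; lia.
Qed.

(* (j, true) stands for the base block {0, a_j, a_j + b_j}, (j, false) for {0, b_j, a_j + b_j};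
   for j < 2i only the first one is used, with multiplicity 2. *)
Definition block (q : nat * bool) : trip v :=
  if q.2 then base_block (fa q.1) (fb q.1) else base_block (fb q.1) (fa q.1).
Definition block_idx :=
  [seq (j, true) | j <- iota 0 N] ++ [seq (j, false) | j <- iota (2 * i) (N - 2 * i)].
Definition block_mult (q : nat * bool) := if q.2 && (q.1 < 2 * i) then 2 else 1.
Definition triple_system := develop (repeat_bases block_idx block block_mult).

Lemma iota_split : iota 0 N = iota 0 (2 * i) ++ iota (2 * i) (N - 2 * i).
Proof. by rewrite -iotaD subnKC. Qed.

Lemma block_idx_ltn q : q \in block_idx -> q.1 < N.
Proof.
rewrite mem_cat => /orP [] /mapP [j]; rewrite mem_iota => /andP [_ jN] -> //=.
by rewrite subnKC in jN.
Qed.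

Lemma block_idx_uniq : uniq block_idx.
Proof.
have pair_inj (b : bool) : injective (fun j : nat => (j, b)) by move=> j j' [].
rewrite cat_uniq !(map_inj_uniq (pair_inj _)) !iota_uniq andbT /=.
by apply/hasPn => q /mapP [j _ ->]; apply/mapP => -[j' _].
Qed.

Lemma big_block_idx (G : nat * bool -> nat) :
  \sum_(q <- block_idx) G q = \sum_(j <- iota 0 (2 * i)) G (j, true) +
     \sum_(j <- iota (2 * i) (N - 2 * i)) (G (j, true) + G (j, false)).
Proof. by rewrite big_cat !big_map iota_split big_cat big_split addnA. Qed.

Lemma sum_block_mult (F : nat -> nat) :
  \sum_(q <- block_idx) block_mult q * F q.1 = 2 * \sum_(j <- iota 0 N) F j.
Proof.
rewrite big_block_idx iota_split big_cat mulnDr !big_distrr /=.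
congr (_ + _); apply: eq_big_seq => j; rewrite mem_iota /block_mult /=.
  by rewrite add0n => ->.
by case/andP=> ij _; rewrite ltnNge ij mul1n addnn mul2n.
Qed.

Lemma count_block_mult m : count (fun q => block_mult q == m) block_idx =
  (m == 2) * (2 * i) + (m == 1) * (2 * (N - 2 * i)).
Proof.
rewrite -sum1_count big_mkcond big_block_idx /=.
rewrite (eq_big_seq (fun=> nat_of_bool (m == 2))); last first.
  by move=> j; rewrite mem_iota /block_mult /= add0n => ->; rewrite eq_sym; case: eqP.
rewrite [X in _ + X](eq_big_seq (fun=> (m == 1) * 2)); last first.
  by move=> j; rewrite mem_iota => /andP [ij _]; rewrite /block_mult /= ltnNge ij eq_sym; case: eqP.
by rewrite !big_const_seq !count_predT !size_iota !iter_addn_0; lia.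
Qed.

Lemma block_distinct3 q : q \in block_idx -> distinct3 (block q).
Proof.
move=> /block_idx_ltn jN; have [ha hb _] := diffs_range jN.
rewrite /block; case: q.2; apply: base_block_distinct3 => //; last rewrite addnC.
all: exact: sum_ab_neq0.
Qed.

Lemma diff3_block q : q.1 < N -> diff3 (block q) =
  if q.2 then (fa q.1, fb q.1, (v - (fa q.1 + fb q.1) %% v) %% v)
  else (fb q.1, fa q.1, (v - (fa q.1 + fb q.1) %% v) %% v).
Proof.
move=> jN; have [/andP [_ av] /andP [_ bv] _] := diffs_range jN.
by rewrite /block; case: q.2; rewrite diff3_base_block // addnC.
Qed.

Lemma block_free_c q : q \in block_idx -> shift_free (@ceqv v) (block q).
Proof.
move=> /block_idx_ltn jN; have [/andP [_ av] /andP [_ bv] _] := diffs_range jN.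
have [ab _ _] := diffs_neq jN.
by rewrite /block; case: q.2; apply: base_block_free_c; rewrite // eq_sym.
Qed.

Lemma all_distinct3_triple_system : all (@distinct3 v) triple_system.
Proof.
apply: all_distinct3_develop; apply/allP => B /flatten_mapP [q qi].
by rewrite mem_nseq => /andP [_ /eqP ->]; apply: block_distinct3.
Qed.

Lemma triple_system_covers (pairs : trip v -> seq ('I_v * 'I_v)) :
  (forall k t, pairs (tshift k t) = map (pshift k) (pairs t)) ->
  (forall d q, q \in block_idx ->
     \sum_(pq <- pairs (block q)) (diff pq.1 pq.2 == d) = count (pred1 d) (diffs q.1)) ->
  forall x y : 'I_v, x != y ->
    \sum_(t <- triple_system) count (pred1 (x, y)) (pairs t) = 2.
Proof.
move=> pairs_tshift block_diffs; apply: develop_covers => // d dv.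
rewrite /repeat_bases big_flatten big_map.
transitivity (2 * \sum_(j <- iota 0 N) count (pred1 d) (diffs j)); last by rewrite diffs_partition.
rewrite -sum_block_mult.
by apply: eq_big_seq => q qi; rewrite big_nseq iter_addn_0 mulnC block_diffs.
Qed.

Lemma fine_c_triple_system e : shift_equivalence e ->
  (forall q q', q \in block_idx -> q' \in block_idx ->
     block q' \in torbit e (block q) -> q = q') ->
  (forall q, q \in block_idx -> shift_free e (block q)) ->
  fine_c e triple_system 1 = 2 * (N - 2 * i) /\ fine_c e triple_system 2 = 2 * i.
Proof.
move=> eE block_inj block_free.
have fine m := fine_c_repeat_bases block_mult eE block_idx_uniq block_inj block_free
  block_distinct3 m.
by rewrite !fine // !count_block_mult /=; split; lia.
Qed.

Section Directed.
Hypothesis fx_add : forall j, j < N -> fx j = (fa j + fb j) %% v.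

(* Translation preserves difference triples; a shared difference forces j = j', and then the
   distinctness of a_j, b_j, x_j excludes the other orientation (and, for cyclic triples,
   a nontrivial rotation). *)
Lemma block_torbit_inj_d q q' : q \in block_idx -> q' \in block_idx ->
  block q' \in torbit (@deqv v) (block q) -> q = q'.
Proof.
case: q q' => j o [j' o'] /block_idx_ltn /= jN /block_idx_ltn /= j'N.
case/torbitP => k /eqP/(congr1 diff3).
rewrite diff3_tshift !diff3_block //=; have [ab _ _] := diffs_neq jN.
case: o o' => [] [] [E1 E2 _];
  have jj' : j = j' by apply: (diffs_index_unique (d := fa j')); rewrite // !inE; lia.
all: by subst j'; first [done | exfalso; lia].
Qed.

Lemma block_diffs_d d q : q \in block_idx ->
  \sum_(pq <- dpairs (block q)) (diff pq.1 pq.2 == d) = count (pred1 d) (diffs q.1).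
Proof.
case: q => j o /block_idx_ltn /= jN; have [/andP [_ av] /andP [_ bv] _] := diffs_range jN.
rewrite /block /diffs; case: o; rewrite !big_cons big_nil /= !diff_zmod0 diff_zmodD //.
  by rewrite (modn_small av) -fx_add //; lia.
by rewrite (modn_small bv) (addnC (fb j)) -fx_add //; lia.
Qed.

Lemma triple_system_DTS :
  cyclic_DTS 2 triple_system /\
  fine_c (@deqv v) triple_system 1 = 2 * (N - 2 * i) /\
  fine_c (@deqv v) triple_system 2 = 2 * i.
Proof.
split; last first.
  apply: fine_c_triple_system deqv_shift_equivalence block_torbit_inj_d _.
  by move=> [j []] _; apply: base_block_free_d.
split.
- exact: all_distinct3_triple_system.
- exact: triple_system_covers dpairs_tshift block_diffs_d.
- by move=> t; rewrite (mult_develop_tshift deqv_shift_equivalence).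
Qed.

End Directed.

Section Mendelsohn.
Hypothesis fx_opp : forall j, j < N -> fx j = (v - (fa j + fb j) %% v) %% v.

Lemma block_torbit_inj_c q q' : q \in block_idx -> q' \in block_idx ->
  block q' \in torbit (@ceqv v) (block q) -> q = q'.
Proof.
case: q q' => j o [j' o'] /block_idx_ltn /= jN /block_idx_ltn /= j'N.
case/torbitP => k /or3P [] /eqP /(congr1 diff3);
  rewrite ?diff3_rot diff3_tshift !diff3_block //= -(fx_opp jN) -(fx_opp j'N);
  have [ab ax bx] := diffs_neq jN;
  case: o o' => [] [] [E1 E2 E3];
  have jj' : j = j' by apply: (diffs_index_unique (d := fa j')); rewrite // !inE; lia.
all: by subst j'; first [done | exfalso; lia].
Qed.

Lemma block_diffs_c d q : q \in block_idx ->
  \sum_(pq <- cpairs (block q)) (diff pq.1 pq.2 == d) = count (pred1 d) (diffs q.1).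
Proof.
case: q => j o /block_idx_ltn /= jN; have [/andP [_ av] /andP [_ bv] _] := diffs_range jN.
rewrite /block /diffs; case: o; rewrite !big_cons big_nil /= diff_zmod0 diff_zmodD // diff_zmod_0.
  by rewrite (modn_small av) -fx_opp //; lia.
by rewrite (modn_small bv) (addnC (fb j)) -fx_opp //; lia.
Qed.

Lemma triple_system_MTS :
  cyclic_MTS 2 triple_system /\
  fine_c (@ceqv v) triple_system 1 = 2 * (N - 2 * i) /\
  fine_c (@ceqv v) triple_system 2 = 2 * i.
Proof.
split; last exact: fine_c_triple_system ceqv_shift_equivalence block_torbit_inj_c block_free_c.
split.
- exact: all_distinct3_triple_system.
- exact: triple_system_covers cpairs_tshift block_diffs_c.
- by move=> t; rewrite (mult_develop_tshift ceqv_shift_equivalence).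
Qed.

End Mendelsohn.
End DifferenceTriples.
End Translation.

Lemma sum_iota_eq_indicator n (f : nat -> nat) d (P : bool) :
  (forall k, k < n -> f k = d -> P) -> (P -> exists2 k, k < n & f k = d) ->
  (forall k k', k < n -> k' < n -> f k = d -> f k' = d -> k = k') ->
  \sum_(k <- iota 0 n) (f k == d) = P.
Proof.
move=> hitP Phit hit_inj; case: (boolP P) => [/Phit [k0 k0n fk0]|nP].
  rewrite (bigD1_seq k0) ?iota_uniq ?mem_iota //= fk0 eqxx big1_seq // => k /andP [kk0 kn].
  rewrite mem_iota in kn; case: eqP => // fk.
  by rewrite (hit_inj k k0) ?eqxx in kk0.
rewrite big1_seq // => k; rewrite mem_iota => /andP [_ kn]; case: eqP => // fk.
by case/negP: nP; apply: (hitP k).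
Qed.

Lemma sum_iota_addn_eq n c d :
  \sum_(k <- iota 0 n) (c + k == d) = (c <= d) && (d < c + n).
Proof.
apply: sum_iota_eq_indicator => [k kn <-|/andP [cd dn]|].
- lia.
- by exists (d - c); lia.
- lia.
Qed.

Lemma sum_iota_subn_eq n c d : n <= c ->
  \sum_(k <- iota 0 n) (c - k == d) = (c - n < d) && (d <= c).
Proof.
move=> nc; apply: sum_iota_eq_indicator => [k kn <-|/andP [cd dc]|].
- lia.
- by exists (c - d); lia.
- lia.
Qed.

Lemma sum_iota_subn_double_eq n c d : 2 * n <= c + 1 ->
  \sum_(k <- iota 0 n) (c - 2 * k == d) = [&& c + 2 - 2 * n <= d, d <= c & ~~ odd (c - d)].
Proof.
move=> nc; apply: sum_iota_eq_indicator => [k kn <-|/and3P [cd dc even_cd]|].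
- lia.
- by exists ((c - d) %/ 2); lia.
- lia.
Qed.

Lemma big_iota_double n (F : nat -> nat) :
  \sum_(j <- iota 0 (2 * n)) F j = \sum_(k <- iota 0 n) F k + \sum_(k <- iota 0 n) F (n + k).
Proof.
rewrite mul2n -addnn iotaD big_cat add0n.
by rewrite (_ : iota n n = map (addn n) (iota 0 n)) ?big_map // -iotaDl addn0.
Qed.

Definition halves n (f g : nat -> nat) j := if j < n then f j else g (j - n).

Lemma sum_count_halves n (f1 f2 f3 g1 g2 g3 : nat -> nat) d :
  \sum_(j <- iota 0 (2 * n))
     count (pred1 d) [:: halves n f1 g1 j; halves n f2 g2 j; halves n f3 g3 j] =
  \sum_(k <- iota 0 n) ((f1 k == d) + (f2 k == d) + (f3 k == d)) +
  \sum_(k <- iota 0 n) ((g1 k == d) + (g2 k == d) + (g3 k == d)).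
Proof.
rewrite big_iota_double; congr (_ + _); apply: eq_big_seq => k; rewrite mem_iota /halves /=.
  by rewrite add0n => ->; rewrite addn0 addnA.
by move=> _; rewrite ltnNge leq_addr addKn addn0 addnA.
Qed.

(* Difference triples (a_j, b_j, x_j), j < 2n, partitioning {1, ..., 6n}; in the second half
   j = n + k.  For the directed ones x_j = a_j + b_j mod 6n+1, for the Mendelsohn ones
   x_j = -(a_j + b_j) mod 6n+1.  The b's run through two interleaved progressions of step 2,
   all other entries through intervals. *)
Definition dts_a n := halves n (fun j => 3 * n + 1 + j) (fun k => 4 * n + 1 + k).
Definition dts_b n := halves n (fun j => 3 * n - 1 - 2 * j) (fun k => 3 * n - 2 * k).
Definition dts_x n := halves n (fun j => 6 * n - j) (fun k => n - k).
Definition mts_a n := halves n (fun j => 2 * n + 1 + j) (fun k => 1 + k).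
Definition mts_b n := halves n (fun j => 5 * n - 2 * j) (fun k => 5 * n - 1 - 2 * k).
Definition mts_x n := halves n (fun j => 5 * n + 1 + j) (fun k => n + 1 + k).

Ltac decide_bools_by_lia := repeat match goal with |- context [nat_of_bool ?b] =>
  (match b with true => fail 1 | false => fail 1 | _ => idtac end);
  first [ have -> : b = true by lia | have -> : b = false by lia ] end.

Ltac case_interval d n :=
  case: (leqP d n) => ?; [| case: (leqP d (2 * n)) => ?; [| case: (leqP d (3 * n)) => ?;
    [| case: (leqP d (4 * n)) => ?; [| case: (leqP d (5 * n)) => ?]]]];
  case: (boolP (odd d)) => ?; case: (boolP (odd n)) => ?.

Section Triples.
Variable n : nat.

Lemma dts_range j : j < 2 * n ->
  [/\ 0 < dts_a n j < 6 * n + 1, 0 < dts_b n j < 6 * n + 1 & 0 < dts_x n j < 6 * n + 1].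
Proof. by move=> jn; rewrite /dts_a /dts_b /dts_x /halves; case: ifP => jn'; split; lia. Qed.

Lemma mts_range j : j < 2 * n ->
  [/\ 0 < mts_a n j < 6 * n + 1, 0 < mts_b n j < 6 * n + 1 & 0 < mts_x n j < 6 * n + 1].
Proof. by move=> jn; rewrite /mts_a /mts_b /mts_x /halves; case: ifP => jn'; split; lia. Qed.

Lemma dts_x_add j : j < 2 * n -> dts_x n j = (dts_a n j + dts_b n j) %% (6 * n + 1).
Proof.
move=> jn; rewrite /dts_a /dts_b /dts_x /halves; case: ifP => jn'; first by rewrite modn_small; lia.
rewrite (_ : 4 * n + 1 + (j - n) + (3 * n - 2 * (j - n)) = n - (j - n) + (6 * n + 1)); last by lia.
by rewrite modnDr modn_small; lia.
Qed.

Lemma mts_x_opp j : j < 2 * n ->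
  mts_x n j = (6 * n + 1 - (mts_a n j + mts_b n j) %% (6 * n + 1)) %% (6 * n + 1).
Proof.
move=> jn; rewrite /mts_a /mts_b /mts_x /halves; case: ifP => jn'.
  rewrite (_ : 2 * n + 1 + j + (5 * n - 2 * j) = n - j + (6 * n + 1)); last by lia.
  by rewrite modnDr (modn_small (m := n - j)) ?modn_small; lia.
by rewrite (modn_small (m := 1 + (j - n) + _)) ?modn_small; lia.
Qed.

Lemma dts_sum_neq0 j : j < 2 * n -> (dts_a n j + dts_b n j) %% (6 * n + 1) != 0.
Proof. by move=> jn; rewrite -dts_x_add //; have [_ _] := dts_range jn; lia. Qed.

Lemma mts_sum_neq0 j : j < 2 * n -> (mts_a n j + mts_b n j) %% (6 * n + 1) != 0.
Proof.
move=> jn; apply/eqP => sum0; move: (mts_x_opp jn); rewrite sum0 subn0 modnn.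
by have [_ _] := mts_range jn; lia.
Qed.

Lemma dts_partition d : 0 < d < 6 * n + 1 ->
  \sum_(j <- iota 0 (2 * n)) count (pred1 d) [:: dts_a n j; dts_b n j; dts_x n j] = 1.
Proof.
move=> dv; rewrite sum_count_halves !big_split /= !sum_iota_addn_eq.
rewrite !sum_iota_subn_double_eq ?sum_iota_subn_eq; [|lia..].
by case_interval d n; decide_bools_by_lia.
Qed.

Lemma mts_partition d : 0 < d < 6 * n + 1 ->
  \sum_(j <- iota 0 (2 * n)) count (pred1 d) [:: mts_a n j; mts_b n j; mts_x n j] = 1.
Proof.
move=> dv; rewrite sum_count_halves !big_split /= !sum_iota_addn_eq.
rewrite !sum_iota_subn_double_eq; [|lia..].
by case_interval d n; decide_bools_by_lia.
Qed.

End Triples.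

Theorem mainTheorem4 (n i : nat) :
  1 <= n -> i <= n ->
  (exists s : seq (trip (6 * n + 1)),
      cyclic_DTS 2 s /\
      fine_c (@deqv _) s 1 = 4 * n - 4 * i /\ fine_c (@deqv _) s 2 = 2 * i) /\
  (exists s : seq (trip (6 * n + 1)),
      cyclic_MTS 2 s /\
      fine_c (@ceqv _) s 1 = 4 * n - 4 * i /\ fine_c (@ceqv _) s 2 = 2 * i).
Proof.
move=> _ i_le_n.
have v_gt0 : 0 < 6 * n + 1 by rewrite addn1.
have i_le : 2 * i <= 2 * n by rewrite leq_mul2l i_le_n orbT.
have fine1 : 2 * (2 * n - 2 * i) = 4 * n - 4 * i by lia.
have [dts [dts1 dts2]] := triple_system_DTS v_gt0 (@dts_range n) (@dts_partition n) i_le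
  (@dts_sum_neq0 n) (@dts_x_add n).
have [mts [mts1 mts2]] := triple_system_MTS v_gt0 (@mts_range n) (@mts_partition n) i_le
  (@mts_sum_neq0 n) (@mts_x_opp n).
by split; eexists; rewrite -fine1; split; eauto.
Qed.
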